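(* For every prime $p>7$, $$H_{\frac{p-1}{2}}^{(3)}\equiv 6\,\frac{H_{p-1}}{p^2}-\frac{81}{10}\,p^2B_{p-5}\pmod{p^3}.$$
   Context: $H_n^{(r)}=\sum_{j=1}^n j^{-r}$, $H_n=H_n^{(1)}$ (for $p>3$, $H_{p-1}/p^2$ is $p$-integral). Bernoulli numbers: $\sum_{n\ge0}B_nt^n/n!=t/(e^t-1)$. Congruences are between $p$-adic integers. *)

From mathcomp Require Import all_boot all_order all_algebra.
Set Implicit Arguments. Unset Strict Implicit. Unset Printing Implicit Defensive.
Import Order.TTheory GRing.Theory Num.Theory.
Local Open Scope ring_scope.

Definition harm (r n : nat) : rat := \sum_(1 <= j < n.+1) ((j%:R : rat) ^+ r)^-1.

(* Bernoulli numbers with B_1 = -1/2 (convention of t/(e^t-1)), defined by the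
   standard recurrence  sum_{k=0}^{n} C(n+1,k) B_k = 0 (n >= 1), B_0 = 1.
   bern_seq n = [:: B_0; ...; B_n]. *)
Fixpoint bern_seq (n : nat) : seq rat :=
  match n with
  | 0 => [:: 1]
  | n'.+1 => let s := bern_seq n' in
      rcons s (- (\sum_(k < n'.+1) ('C(n'.+2, k))%:R * nth 0 s k) / (n'.+2)%:R)
  end.

Definition bernoulli (n : nat) : rat := nth 0 (bern_seq n) n.

Definition p_integral (p : nat) (r : rat) : bool := ~~ (p %| `|denq r|)%N.

Definition congr_mod (p k : nat) (x y : rat) : bool :=
  p_integral p ((x - y) / ((p ^ k)%N)%:R).

From mathcomp Require Import all_boot all_order all_algebra ring zify.
Import Order.TTheory GRing.Theory Num.Theory.
Local Open Scope ring_scope.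
Set Implicit Arguments. Unset Strict Implicit.

(* Everything then comes from pairing the terms of sums over 1 <= j <= p - 1
   in two ways, j <-> p - j and 2i <-> p - 2i, together with local expansions:
   - the geometric expansion of 1/(p - d) gives H_{p-1} in terms of
     H_n^(2), ..., H_n^(5) modulo p^5, in two ways; eliminating H_n^(2)
     expresses H_n^(3) through H_{p-1}/p^2, H_n^(4) and H_n^(5) mod p^3;
   - the binomial expansion gives H_{p-1}^(4) in two ways modulo p^2, whence
     H_n^(4) = -(31/15) p H_n^(5) mod p^2;
   - pairing sum_{j<p} j^(p-5) in both ways and comparing with Faulhaber's
     formula (sum_{j<p} j^m = p B_m mod p^2) together with Fermat's little
     theorem gives H_n^(5) = -6 B_{p-5} mod p.
   Combining the three congruences yields the theorem. *)

Section PIntegral.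
Variable p : nat.
Hypothesis p_prime : prime p.
Local Notation pint := (p_integral p).

Lemma pint_frac (a b : int) : ~~ (p %| `|b|)%N -> pint (a%:~R / b%:~R).
Proof.
rewrite /p_integral => pNb; apply: contra pNb => pden.
have [->|b0] := eqVneq b 0; first by rewrite dvdn0.
set x := a%:~R / b%:~R : rat.
have cross : numq x * b = a * denq x.
  apply/eqP; rewrite -(eqr_int rat) !rmorphM /= numqE /x; apply/eqP.
  by field; rewrite intr_eq0.
have : (`|denq x| %| `|numq x| * `|b|)%N by rewrite -abszM cross abszM dvdn_mull.
rewrite Gauss_dvdr; first exact: dvdn_trans.
by rewrite coprime_sym coprime_num_den.
Qed.

Lemma pint_denM x y : pint x -> pint y -> ~~ (p %| `|(denq x * denq y)%R|)%N.
Proof. by rewrite /p_integral abszM Euclid_dvdM // negb_or => -> ->. Qed.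

Lemma pint_nat (m : nat) : pint m%:R.
Proof. by rewrite /p_integral -[m%:R]/((m%:Z)%:~R : rat) denq_int absz1 Euclid_dvd1. Qed.

Lemma pint0 : pint 0. Proof. exact: (pint_nat 0). Qed.
Lemma pint1 : pint 1. Proof. exact: (pint_nat 1). Qed.

Lemma pintN x : pint x -> pint (- x).
Proof. by rewrite /p_integral denqN. Qed.

Lemma pintD x y : pint x -> pint y -> pint (x + y).
Proof.
move=> px py; have := pint_frac (numq x * denq y + numq y * denq x) (pint_denM px py).
suff -> : x + y = (numq x * denq y + numq y * denq x)%:~R / (denq x * denq y)%:~R by [].
rewrite rmorphD !rmorphM /= !numqE.
by field; rewrite !intr_eq0 !denq_neq0.
Qed.

Lemma pintM x y : pint x -> pint y -> pint (x * y).
Proof.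
move=> px py; have := pint_frac (numq x * numq y) (pint_denM px py).
suff -> : x * y = (numq x * numq y)%:~R / (denq x * denq y)%:~R by [].
rewrite !rmorphM /= !numqE.
by field; rewrite !intr_eq0 !denq_neq0.
Qed.

Lemma pintX x k : pint x -> pint (x ^+ k).
Proof. by move=> px; elim: k => [|k IH]; [exact: pint1 | rewrite exprS; apply: pintM]. Qed.

Lemma pint_sum (I : eqType) (r : seq I) (F : I -> rat) :
  {in r, forall i, pint (F i)} -> pint (\sum_(i <- r) F i).
Proof.
move=> pF; rewrite big_seq; apply: (big_ind pint) => //; [exact: pint0 | exact: pintD].
Qed.

Lemma pintV_nat (d : nat) : ~~ (p %| d)%N -> pint d%:R^-1.
Proof. by move=> pNd; have := @pint_frac 1 d; rewrite absz_nat mul1r; apply. Qed.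

Lemma ndvd_lt (d : nat) : (0 < d < p)%N -> ~~ (p %| d)%N.
Proof.
by case/andP=> d_gt0 d_lt_p; apply/negP => /(dvdn_leq d_gt0); rewrite leqNgt d_lt_p.
Qed.

Lemma pintV_lt (d : nat) : (0 < d < p)%N -> pint d%:R^-1.
Proof. by move/ndvd_lt; apply: pintV_nat. Qed.

End PIntegral.

Ltac pint_auto pp := repeat match goal with
  | |- is_true (p_integral _ (_ + _)) => apply: (pintD pp)
  | |- is_true (p_integral _ (- _)) => apply: pintN
  | |- is_true (p_integral _ (_ * _)) => apply: (pintM pp)
  | |- is_true (p_integral _ (_ ^+ _)) => apply: (pintX pp)
  | |- is_true (p_integral _ (_ %:R)) => apply: (pint_nat pp)
  | |- is_true (p_integral _ 1) => apply: (pint1 pp)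
  | |- is_true (p_integral _ ?x) => assumption
  end.

Section Congruence.
Variable p : nat.
Hypothesis p_prime : prime p.
Local Notation pint := (p_integral p).
Local Notation P := (p%:R : rat).

Lemma congr_modE k x y : congr_mod p k x y = pint ((x - y) / P ^+ k).
Proof. by rewrite /congr_mod natrX. Qed.

Lemma congr_mod_by_diff k x y x' y' :
  congr_mod p k x y -> x' - y' = x - y -> congr_mod p k x' y'.
Proof. by rewrite !congr_modE => + ->. Qed.

Lemma eq_congr_mod k x y x' y' :
  congr_mod p k x y -> x = x' -> y = y' -> congr_mod p k x' y'.
Proof. by move=> + <- <-. Qed.

Lemma congr_mod_refl k x : congr_mod p k x x.
Proof. by rewrite congr_modE subrr mul0r (pint0 p_prime). Qed.

Lemma congr_mod_sym k x y : congr_mod p k x y -> congr_mod p k y x.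
Proof. by rewrite !congr_modE => xy; rewrite -opprB mulNr; apply: pintN. Qed.

Lemma congr_mod_trans k y x z :
  congr_mod p k x y -> congr_mod p k y z -> congr_mod p k x z.
Proof.
rewrite !congr_modE => xy yz.
by rewrite -[x - z](subrKA y) mulrDl; apply: (pintD p_prime).
Qed.

Lemma congr_mod_lin k a b x1 y1 x2 y2 : pint a -> pint b ->
  congr_mod p k x1 y1 -> congr_mod p k x2 y2 ->
  congr_mod p k (a * x1 + b * x2) (a * y1 + b * y2).
Proof.
rewrite !congr_modE => pa pb e1 e2.
have -> : (a * x1 + b * x2 - (a * y1 + b * y2)) / P ^+ k =
  a * ((x1 - y1) / P ^+ k) + b * ((x2 - y2) / P ^+ k) by ring.
by apply: (pintD p_prime); apply: (pintM p_prime).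
Qed.

Lemma congr_mod_scale k c x y : pint c ->
  congr_mod p k x y -> congr_mod p k (c * x) (c * y).
Proof.
move=> pc xy; have := congr_mod_lin pc (pint0 p_prime) xy (congr_mod_refl k 0).
by rewrite !mul0r !addr0.
Qed.

Lemma congr_mod_add k x1 y1 x2 y2 :
  congr_mod p k x1 y1 -> congr_mod p k x2 y2 -> congr_mod p k (x1 + x2) (y1 + y2).
Proof.
move=> e1 e2; have := congr_mod_lin (pint1 p_prime) (pint1 p_prime) e1 e2.
by rewrite !mul1r.
Qed.

Lemma congr_mod_sub k x1 y1 x2 y2 :
  congr_mod p k x1 y1 -> congr_mod p k x2 y2 -> congr_mod p k (x1 - x2) (y1 - y2).
Proof.
move=> e1 e2; have := congr_mod_lin (pint1 p_prime) (pintN (pint1 p_prime)) e1 e2.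
by rewrite !mul1r !mulN1r.
Qed.

Lemma congr_mod_mulP k m x y :
  congr_mod p (k + m) (P ^+ m * x) (P ^+ m * y) = congr_mod p k x y.
Proof.
rewrite !congr_modE; congr pint.
by rewrite exprD; field; rewrite !expf_neq0 // pnatr_eq0 -lt0n prime_gt0.
Qed.

Lemma congr_mod_multiple k w : pint w -> congr_mod p k (P ^+ k * w) 0.
Proof.
move=> pw; rewrite congr_modE subr0 mulrAC divff ?mul1r //.
by rewrite expf_neq0 // pnatr_eq0 -lt0n prime_gt0.
Qed.

Lemma congr_mod_eqmul k x y w : pint w -> x - y = P ^+ k * w -> congr_mod p k x y.
Proof.
by move=> pw xy; apply: (congr_mod_by_diff (congr_mod_multiple k pw)); rewrite subr0.
Qed.

Lemma congr_mod_mul k x1 y1 x2 y2 : pint x2 -> pint y1 ->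
  congr_mod p k x1 y1 -> congr_mod p k x2 y2 -> congr_mod p k (x1 * x2) (y1 * y2).
Proof.
move=> px2 py1 e1 e2.
by apply: (congr_mod_by_diff (congr_mod_lin px2 py1 e1 e2)); ring.
Qed.

Lemma congr_mod_exp k m x y : pint x -> pint y ->
  congr_mod p k x y -> congr_mod p k (x ^+ m) (y ^+ m).
Proof.
move=> px py xy; elim: m => [|m IH]; first exact: congr_mod_refl.
by rewrite !exprS; apply: congr_mod_mul => //; apply: (pintX p_prime).
Qed.

Lemma congr_mod_sum k (I : eqType) (r : seq I) (F G : I -> rat) :
  {in r, forall i, congr_mod p k (F i) (G i)} ->
  congr_mod p k (\sum_(i <- r) F i) (\sum_(i <- r) G i).
Proof.
move=> FG; rewrite big_seq [X in congr_mod _ _ _ X]big_seq.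
elim/big_rec2: _ => [|i u v ri uv]; first exact: congr_mod_refl.
exact: congr_mod_add (FG i ri) uv.
Qed.

End Congruence.

Section Expansions.
Variable p : nat.
Hypothesis p_prime : prime p.
Local Notation pint := (p_integral p).
Local Notation P := (p%:R : rat).

(* 1/(p - d) = -1/d * 1/(1 - p/d), expanded as a geometric series up to p^k. *)
Lemma inv_geometric d k : (0 < d < p)%N ->
  congr_mod p k (P - d%:R)^-1 (- \sum_(0 <= r < k) P ^+ r / d%:R ^+ r.+1).
Proof.
move=> /andP[d_gt0 d_lt_p].
have pd_gt0 : (0 < p - d)%N by rewrite subn_gt0.
have Pxy : P = d%:R + (p - d)%:R by rewrite -natrD subnKC //; exact: ltnW.
rewrite -natrB; last exact: ltnW.
apply: (congr_mod_eqmul p_prime (w := (d%:R ^+ k)^-1 * (p - d)%:R^-1)).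
  rewrite -exprVn; apply: (pintM p_prime); first apply: (pintX p_prime).
    by apply: pintV_lt; rewrite d_gt0.
  by apply: pintV_lt; rewrite pd_gt0 ltn_subrL d_gt0 prime_gt0.
have x0 : d%:R != 0 :> rat by rewrite pnatr_eq0 -lt0n.
have y0 : (p - d)%:R != 0 :> rat by rewrite pnatr_eq0 -lt0n.
rewrite opprK; elim: k => [|k IH]; first by rewrite big_geq // addr0 !expr0 invr1 !mul1r.
rewrite big_nat_recr //= addrA IH Pxy.
by rewrite !exprS; field; rewrite x0 y0 expf_neq0.
Qed.

Lemma inv_pair_expansion d k : (0 < d < p)%N -> (0 < k)%N ->
  congr_mod p k (d%:R^-1 + (P - d%:R)^-1)
    (- \sum_(1 <= r < k) P ^+ r / d%:R ^+ r.+1).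
Proof.
move=> hd k_gt0.
have := congr_mod_add p_prime (congr_mod_refl p_prime k d%:R^-1) (inv_geometric k hd).
by rewrite big_ltn // expr0 div1r expr1 opprD addNKr.
Qed.

Lemma binomial_linear u v m : pint u -> pint v ->
  congr_mod p 2 ((u + P * v) ^+ m.+1) (u ^+ m.+1 + m.+1%:R * P * v * u ^+ m).
Proof.
move=> pu pv; have puv : pint (u + P * v) by pint_auto p_prime.
elim: m => [|m IH].
  by rewrite expr1 expr0 mulr1 mul1r; exact: congr_mod_refl.
have pbin : pint (u ^+ m.+1 + m.+1%:R * P * v * u ^+ m) by pint_auto p_prime.
have := congr_mod_mul p_prime puv pbin IH (congr_mod_refl p_prime 2 (u + P * v)).
rewrite -!exprSr => IHS; apply: (congr_mod_trans p_prime IHS).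
apply: (congr_mod_eqmul p_prime (w := m.+1%:R * v ^+ 2 * u ^+ m)).
  by pint_auto p_prime.
by rewrite !exprS; ring.
Qed.

Lemma even_pow_pair u v m : odd m -> pint u -> pint v ->
  congr_mod p 2 (u ^+ m.+1 + (P * v - u) ^+ m.+1)
    (2 * u ^+ m.+1 - m.+1%:R * P * v * u ^+ m).
Proof.
move=> m_odd pu pv.
have sign_even : (- u) ^+ m.+1 = u ^+ m.+1 by rewrite exprNn -signr_odd /= m_odd mul1r.
have sign_odd : (- u) ^+ m = - u ^+ m by rewrite exprNn -signr_odd m_odd mulN1r.
have := congr_mod_add p_prime (congr_mod_refl p_prime 2 (u ^+ m.+1))
  (binomial_linear m (pintN pu) pv).
rewrite sign_even sign_odd => e; apply: (eq_congr_mod e); [by rewrite [- u + _]addrC | ring].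
Qed.

Lemma inv_pow_pair d m : odd m -> (0 < d < p)%N ->
  congr_mod p 2 ((d%:R ^+ m.+1)^-1 + ((P - d%:R) ^+ m.+1)^-1)
    (2 * (d%:R ^+ m.+1)^-1 + m.+1%:R * P * (d%:R ^+ m.+2)^-1).
Proof.
move=> m_odd hd; have /andP[d_gt0 d_lt_p] := hd.
have d0 : d%:R != 0 :> rat by rewrite pnatr_eq0 -lt0n.
set y := d%:R^-1 : rat; have py : pint y by apply: pintV_lt.
have pz : pint (P - d%:R)^-1.
  by rewrite -natrB; [apply: pintV_lt; lia | exact: ltnW].
have inv1 : congr_mod p 2 (P - d%:R)^-1 (P * (- y ^+ 2) - y).
  have := inv_geometric 2 hd; rewrite big_nat_recr //= big_nat1 => e.
  by apply: (eq_congr_mod e) => //; rewrite /y; field.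
have pz' : pint (P * (- y ^+ 2) - y) by pint_auto p_prime.
apply: (congr_mod_trans p_prime (y := y ^+ m.+1 + (P * (- y ^+ 2) - y) ^+ m.+1)).
  have := congr_mod_add p_prime (congr_mod_refl p_prime 2 (y ^+ m.+1))
    (congr_mod_exp p_prime m.+1 pz pz' inv1).
  by move/eq_congr_mod; apply => //; rewrite /y !exprVn.
apply: (eq_congr_mod (even_pow_pair m_odd py (pintN (pintX p_prime 2 py)))) => //.
by rewrite !exprS /y !exprVn expr0; field; rewrite d0 expf_neq0.
Qed.
End Expansions.

Section Fermat.
Variable p : nat.
Hypothesis p_prime : prime p.
Local Notation pint := (p_integral p).

Lemma fermat_congr c : congr_mod p 1 (c%:R ^+ p) c%:R.
Proof.
have c_le : (c <= c ^ p)%N.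
  case: c => // c; rewrite -{1}(expn1 c.+1) leq_pexp2l //; exact: prime_gt0.
have dvd : (p %| c ^ p - c)%N.
  by rewrite -eqn_mod_dvd // fermat_little.
rewrite congr_modE expr1 -natrX -natrB // -(divnK dvd) natrM mulfK ?pint_nat //.
by rewrite pnatr_eq0 -lt0n prime_gt0.
Qed.

Lemma fermat_inv c k : ~~ (p %| c)%N -> (k < p)%N ->
  congr_mod p 1 (c%:R ^+ (p - k.+1)) (c%:R ^+ k)^-1.
Proof.
move=> pNc k_lt_p.
have c0 : c%:R != 0 :> rat by rewrite pnatr_eq0; apply: contraNneq pNc => ->.
have pw : pint (c%:R ^+ k.+1)^-1.
  by rewrite -natrX; apply: pintV_nat; rewrite // Euclid_dvdX // negb_and pNc.
apply: (eq_congr_mod (congr_mod_scale p_prime pw (fermat_congr c))).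
  by rewrite -[in _ ^+ p](subnK k_lt_p) exprD mulrCA mulVf ?mulr1 // expf_neq0.
by rewrite exprS invfM mulrAC mulVf // mul1r.
Qed.

End Fermat.

Lemma size_bern_seq n : size (bern_seq n) = n.+1.
Proof. by elim: n => //= n IH; rewrite size_rcons IH. Qed.

Lemma nth_bern_seq n k : (k <= n)%N -> nth 0 (bern_seq n) k = bernoulli k.
Proof.
elim: n => [|n IH]; first by rewrite leqn0 => /eqP ->.
rewrite leq_eqVlt => /orP[/eqP -> //|k_le_n].
by rewrite /= nth_rcons size_bern_seq k_le_n IH.
Qed.

Lemma bernoulliS n :
  n.+2%:R * bernoulli n.+1 = - \sum_(k < n.+1) 'C(n.+2, k)%:R * bernoulli k.
Proof.
rewrite {1}/bernoulli /= nth_rcons size_bern_seq ltnn eqxx mulrC divfK ?pnatr_eq0 //.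
by congr (- _); apply: eq_bigr => k _; rewrite nth_bern_seq // -ltnS.
Qed.

Section PowerSums.
Variable p : nat.
Hypothesis p_prime : prime p.
Local Notation pint := (p_integral p).
Local Notation P := (p%:R : rat).

(* B_k is p-integral for k <= p - 2, since only 1/2, ..., 1/(p-1) enter its recurrence. *)
Lemma bernoulli_pint k : (k <= p - 2)%N -> pint (bernoulli k).
Proof.
elim/ltn_ind: k => -[_ _|k IH k_le]; first exact: (pint1 p_prime).
have -> : bernoulli k.+1 = k.+2%:R^-1 * (k.+2%:R * bernoulli k.+1).
  by rewrite mulKf // pnatr_eq0.
rewrite bernoulliS; apply: (pintM p_prime).
  by apply: pintV_lt; have := prime_gt1 p_prime; lia.
apply: pintN; apply: (pint_sum p_prime) => i _; apply: (pintM p_prime (pint_nat p_prime _)).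
by apply: IH => //; have := ltn_ord i; lia.
Qed.

Definition power_sum (m : nat) : rat := \sum_(0 <= j < p) (j%:R : rat) ^+ m.

(* Telescoping (j+1)^M - j^M over 0 <= j < p. *)
Lemma power_sum_rec M : (0 < M)%N -> P ^+ M = \sum_(i < M) 'C(M, i)%:R * power_sum i.
Proof.
move=> M_gt0.
have -> : P ^+ M = \sum_(0 <= j < p) (j.+1%:R ^+ M - (j%:R : rat) ^+ M).
  by rewrite telescope_sumr // expr0n gtn_eqF // subr0.
under eq_bigr => j _.
  rewrite -addn1 natrD [_ + 1]addrC exprDn big_ord_recr /= subnn expr0 mul1r binn mulr1n addrK.
  under eq_bigr => i _ do rewrite expr1n mul1r -mulr_natl.
  over.
by rewrite exchange_big /=; apply: eq_bigr => i _; rewrite mulr_sumr.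
Qed.

Lemma power_sum_bernoulli m : (m <= p - 2)%N ->
  congr_mod p 2 (power_sum m) (P * bernoulli m).
Proof.
elim/ltn_ind: m => -[_ _|m IH m_le].
  rewrite /bernoulli /= mulr1 /power_sum (eq_bigr (fun _ => 1)) => [|j _]; last exact: expr0.
  by rewrite sumr_const_nat subn0; exact: congr_mod_refl.
have sums : congr_mod p 2 (\sum_(i < m.+1) 'C(m.+2, i)%:R * power_sum i)
                          (\sum_(i < m.+1) 'C(m.+2, i)%:R * (P * bernoulli i)).
  apply: (congr_mod_sum p_prime) => i _; apply: (congr_mod_scale p_prime (pint_nat p_prime _)).
  by apply: IH => //; have := ltn_ord i; lia.
have top : congr_mod p 2 (P ^+ m.+2) 0.
  by rewrite -[m.+2]addn2 exprD mulrC; apply: congr_mod_multiple; pint_auto p_prime.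
have recS : P ^+ m.+2 - \sum_(i < m.+1) 'C(m.+2, i)%:R * power_sum i
            = m.+2%:R * power_sum m.+1.
  by rewrite power_sum_rec // big_ord_recr /= binSn addrAC subrr add0r.
have recB : 0 - \sum_(i < m.+1) 'C(m.+2, i)%:R * (P * bernoulli i)
            = m.+2%:R * (P * bernoulli m.+1).
  rewrite mulrCA bernoulliS mulrN mulr_sumr sub0r; congr (- _).
  by apply: eq_bigr => i _; rewrite mulrCA.
have := congr_mod_sub p_prime top sums; rewrite recS recB => e.
have m2_lt_p : (0 < m.+2 < p)%N by have := prime_gt1 p_prime; lia.
by have := congr_mod_scale p_prime (pintV_lt m2_lt_p) e; rewrite !mulKf ?pnatr_eq0.
Qed.

End PowerSums.

Lemma sum_pair_reflect (V : nmodType) (f : nat -> V) n :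
  \sum_(1 <= j < n.*2.+1) f j = \sum_(1 <= i < n.+1) (f i + f (n.*2.+1 - i)%N).
Proof.
rewrite big_split /= (@big_cat_nat _ _ _ n.+1) //=; last lia.
congr (_ + _); rewrite big_nat_rev /= -{1}(add1n n) big_addn.
have -> : (n.*2.+1 - n = n.+1)%N by lia.
by apply: eq_big_nat => i /andP[i_ge1 i_le]; congr f; lia.
Qed.

Lemma sum_pair_parity (V : nmodType) (f : nat -> V) n :
  \sum_(1 <= j < n.*2.+1) f j = \sum_(1 <= i < n.+1) (f i.*2 + f (n.*2.+1 - i.*2)%N).
Proof.
have consecutive : \sum_(1 <= j < n.*2.+1) f j = \sum_(1 <= i < n.+1) (f i.*2 + f i.*2.-1).
  elim: n => [|n IH]; first by rewrite !big_geq.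
  rewrite doubleS (big_nat_recr n.*2.+2) // (big_nat_recr n.*2.+1) // IH.
  by rewrite (big_nat_recr n.+1) //= doubleS /= -!addrA (addrC (f _)).
rewrite consecutive !big_split /=; congr (_ + _).
by rewrite big_nat_rev; apply: eq_big_nat => i /andP[i_ge1 i_le]; congr f; lia.
Qed.

Section HalfSums.
Variable p : nat.
Hypothesis p_prime : prime p.
Variable n : nat.
Hypothesis p_eq : p = n.*2.+1.
Local Notation P := (p%:R : rat).

Definition half_power_sum (k : nat) : rat := \sum_(1 <= i < n.+1) (i%:R : rat) ^+ k.

Lemma half_range i : i \in index_iota 1 n.+1 -> (0 < i < p)%N /\ (0 < i.*2 < p)%N.
Proof. by rewrite mem_index_iota p_eq => /andP[? ?]; split; apply/andP; split; lia. Qed.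

Lemma natr_double i : (i.*2)%:R = 2 * i%:R :> rat.
Proof. by rewrite -muln2 natrM mulrC. Qed.

Lemma natr_compl d : (d <= p)%N -> (n.*2.+1 - d)%:R = P - d%:R.
Proof. by move=> d_le; rewrite -p_eq natrB. Qed.

Lemma harm1_reflect k : (0 < k)%N ->
  congr_mod p k (harm 1 n.*2) (- \sum_(1 <= r < k) P ^+ r * harm r.+1 n).
Proof.
move=> k_gt0.
have pairs : {in index_iota 1 n.+1, forall i, congr_mod p k
    ((i%:R ^+ 1)^-1 + ((n.*2.+1 - i)%N%:R ^+ 1)^-1)
    (- \sum_(1 <= r < k) P ^+ r / i%:R ^+ r.+1)}.
  move=> i /half_range[hd _]; have /andP[_ i_lt_p] := hd.
  by rewrite !expr1 (natr_compl (ltnW i_lt_p)); apply: inv_pair_expansion.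
apply: (eq_congr_mod (congr_mod_sum p_prime pairs)); first by rewrite /harm sum_pair_reflect.
rewrite sumrN exchange_big /=; congr (- _).
by apply: eq_bigr => r _; rewrite mulr_sumr.
Qed.

Lemma harm1_parity k : (0 < k)%N ->
  congr_mod p k (harm 1 n.*2) (- \sum_(1 <= r < k) P ^+ r / 2 ^+ r.+1 * harm r.+1 n).
Proof.
move=> k_gt0.
have pairs : {in index_iota 1 n.+1, forall i, congr_mod p k
    ((i.*2%:R ^+ 1)^-1 + ((n.*2.+1 - i.*2)%N%:R ^+ 1)^-1)
    (- \sum_(1 <= r < k) P ^+ r / 2 ^+ r.+1 / i%:R ^+ r.+1)}.
  move=> i /half_range[_ hd]; have /andP[_ i_lt_p] := hd.
  rewrite !expr1 (natr_compl (ltnW i_lt_p)).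
  apply: (eq_congr_mod (inv_pair_expansion p_prime hd k_gt0)) => //.
  congr (- _); apply: eq_bigr => r _.
  by rewrite natr_double exprMn invfM mulrA.
apply: (eq_congr_mod (congr_mod_sum p_prime pairs)); first by rewrite /harm sum_pair_parity.
rewrite sumrN exchange_big /=; congr (- _).
by apply: eq_bigr => r _; rewrite mulr_sumr.
Qed.

Lemma harm_even_reflect m : odd m ->
  congr_mod p 2 (harm m.+1 n.*2) (2 * harm m.+1 n + m.+1%:R * P * harm m.+2 n).
Proof.
move=> m_odd.
have pairs : {in index_iota 1 n.+1, forall i, congr_mod p 2
    ((i%:R ^+ m.+1)^-1 + ((n.*2.+1 - i)%N%:R ^+ m.+1)^-1)
    (2 * (i%:R ^+ m.+1)^-1 + m.+1%:R * P * (i%:R ^+ m.+2)^-1)}.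
  move=> i /half_range[hd _]; have /andP[_ i_lt_p] := hd.
  by rewrite (natr_compl (ltnW i_lt_p)); apply: inv_pow_pair.
apply: (eq_congr_mod (congr_mod_sum p_prime pairs)); first by rewrite /harm sum_pair_reflect.
by rewrite big_split /= -!mulr_sumr.
Qed.

Lemma harm_even_parity m : odd m ->
  congr_mod p 2 (harm m.+1 n.*2)
    ((2 ^+ m)^-1 * harm m.+1 n + m.+1%:R * P / 2 ^+ m.+2 * harm m.+2 n).
Proof.
move=> m_odd.
have pairs : {in index_iota 1 n.+1, forall i, congr_mod p 2
    ((i.*2%:R ^+ m.+1)^-1 + ((n.*2.+1 - i.*2)%N%:R ^+ m.+1)^-1)
    ((2 ^+ m)^-1 * (i%:R ^+ m.+1)^-1 + m.+1%:R * P / 2 ^+ m.+2 * (i%:R ^+ m.+2)^-1)}.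
  move=> i /half_range[hi hd]; have /andP[_ i_lt_p] := hd.
  have i0 : i%:R != 0 :> rat by rewrite pnatr_eq0 -lt0n; case/andP: hi.
  rewrite (natr_compl (ltnW i_lt_p)).
  apply: (eq_congr_mod (inv_pow_pair p_prime m_odd hd)) => //.
  by rewrite natr_double !exprMn !exprS; field; rewrite i0 !expf_neq0.
apply: (eq_congr_mod (congr_mod_sum p_prime pairs)); first by rewrite /harm sum_pair_parity.
by rewrite big_split /= -!mulr_sumr.
Qed.

Lemma power_sum_half (m : nat) :
  power_sum p m.+1 = \sum_(1 <= j < n.*2.+1) (j%:R : rat) ^+ m.+1.
Proof. by rewrite /power_sum p_eq big_ltn // expr0n add0r. Qed.

Lemma power_sum_reflect m : odd m ->
  congr_mod p 2 (power_sum p m.+1)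
    (2 * half_power_sum m.+1 - m.+1%:R * P * half_power_sum m).
Proof.
move=> m_odd.
have pairs : {in index_iota 1 n.+1, forall i, congr_mod p 2
    (i%:R ^+ m.+1 + (n.*2.+1 - i)%N%:R ^+ m.+1)
    (2 * i%:R ^+ m.+1 - m.+1%:R * P * 1 * i%:R ^+ m)}.
  move=> i /half_range[hd _]; have /andP[_ i_lt_p] := hd.
  rewrite (natr_compl (ltnW i_lt_p)) -[P in P - _]mulr1.
  exact: even_pow_pair m_odd (pint_nat p_prime i) (pint1 p_prime).
apply: (eq_congr_mod (congr_mod_sum p_prime pairs)).
  by rewrite power_sum_half sum_pair_reflect.
by rewrite sumrB -!mulr_sumr mulr1.
Qed.

Lemma power_sum_parity m : odd m ->
  congr_mod p 2 (power_sum p m.+1)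
    (2 * 2 ^+ m.+1 * half_power_sum m.+1 - m.+1%:R * P * 2 ^+ m * half_power_sum m).
Proof.
move=> m_odd.
have pairs : {in index_iota 1 n.+1, forall i, congr_mod p 2
    (i.*2%:R ^+ m.+1 + (n.*2.+1 - i.*2)%N%:R ^+ m.+1)
    (2 * 2 ^+ m.+1 * i%:R ^+ m.+1 - m.+1%:R * P * 2 ^+ m * i%:R ^+ m)}.
  move=> i /half_range[_ hd]; have /andP[_ i_lt_p] := hd.
  rewrite (natr_compl (ltnW i_lt_p)) -[P in P - _]mulr1.
  have := even_pow_pair p_prime m_odd (pint_nat p_prime i.*2) (pint1 p_prime).
  by move/eq_congr_mod; apply => //; rewrite natr_double !exprMn; ring.
apply: (eq_congr_mod (congr_mod_sum p_prime pairs)).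
  by rewrite power_sum_half sum_pair_parity.
by rewrite sumrB -!mulr_sumr.
Qed.

Lemma harm_fermat k : (k < p)%N -> congr_mod p 1 (harm k n) (half_power_sum (p - k.+1)).
Proof.
move=> k_lt_p; apply: congr_mod_sym => //; apply: (congr_mod_sum p_prime).
by move=> i /half_range[hd _]; apply: (fermat_inv p_prime (ndvd_lt hd) k_lt_p).
Qed.
End HalfSums.

Section Main.
Variable p : nat.
Hypothesis p_prime : prime p.
Hypothesis p_gt7 : (7 < p)%N.
Variable n : nat.
Hypothesis p_eq : p = n.*2.+1.
Local Notation pint := (p_integral p).
Local Notation P := (p%:R : rat).

Lemma pintV_small d : (0 < d <= 7)%N -> pint d%:R^-1.
Proof. by move=> /andP[d_gt0 d_le7]; apply: pintV_lt; rewrite d_gt0 (leq_ltn_trans d_le7). Qed.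

Lemma pint_half_power_sum k : pint (half_power_sum n k).
Proof. by apply: (pint_sum p_prime) => i _; pint_auto p_prime. Qed.

Lemma P_neq0 : P != 0.
Proof. by rewrite pnatr_eq0 -lt0n prime_gt0. Qed.

(* Eliminating H_n^{(2)} between the two pairings of H_{p-1}. *)
Lemma harm3_congr : congr_mod p 3 (harm 3 n)
  (6 * (harm 1 n.*2 / P ^+ 2) - 3 / 2 * P * harm 4 n - 7 / 4 * P ^+ 2 * harm 5 n).
Proof.
have e := congr_mod_sub p_prime
  (congr_mod_scale p_prime (pint_nat p_prime 4) (harm1_parity p_prime p_eq (isT : 0 < 5)%N))
  (harm1_reflect p_prime p_eq (isT : 0 < 5)%N).
rewrite -(congr_mod_mulP p_prime 3 2) -[(3 + 2)%N]/5%N; apply: congr_mod_sym.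
apply: (congr_mod_by_diff (congr_mod_scale p_prime (pint_nat p_prime 2) e)).
by rewrite /index_iota /= !big_cons !big_nil; field; rewrite P_neq0.
Qed.

(* Eliminating H_{p-1}^{(4)} between its two pairings. *)
Lemma harm4_congr : congr_mod p 2 (harm 4 n) (- (31 / 15) * P * harm 5 n).
Proof.
have e := congr_mod_sub p_prime (harm_even_reflect p_prime p_eq (isT : odd 3))
                                 (harm_even_parity p_prime p_eq (isT : odd 3)).
have c_pint : pint (- 8 * (3%:R^-1 * 5%:R^-1)).
  by have := pintV_small (isT : 0 < 3 <= 7)%N; have := pintV_small (isT : 0 < 5 <= 7)%N;
     move=> *; pint_auto p_prime.
apply: (congr_mod_by_diff (congr_mod_scale p_prime c_pint e)).
by field.
Qed.

(* Comparing the two pairings of sum_{j<p} j^(m+1) with Faulhaber's formula: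
   (2^(m+1) - 1) B_(m+1) = -(m+1) 2^m S_n(m) mod p, for odd m. *)
Lemma bernoulli_half_power_sum m : odd m -> (m.+1 <= p - 2)%N ->
  congr_mod p 1 ((2 * 2 ^+ m - 1) * bernoulli m.+1)
    (- m.+1%:R * 2 ^+ m * half_power_sum n m).
Proof.
move=> m_odd m_le.
have p2T : pint (2 * 2 ^+ m) by pint_auto p_prime.
have p2T1 : pint (2 * 2 ^+ m - 1) by pint_auto p_prime.
have e := congr_mod_sub p_prime
  (congr_mod_sub p_prime (congr_mod_scale p_prime p2T (power_sum_reflect p_prime p_eq m_odd))
                         (power_sum_parity p_prime p_eq m_odd))
  (congr_mod_scale p_prime p2T1 (power_sum_bernoulli p_prime m_le)).
rewrite -(congr_mod_mulP p_prime 1 1) -[(1 + 1)%N]/2%N.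
by apply: (congr_mod_by_diff e); rewrite [2 ^+ m.+1]exprS; ring.
Qed.

(* The case m = p - 6, where Fermat gives 2^(p-6) = 1/32 and p - 5 = -5 mod p:
   (1/16 - 1) B_(p-5) = (5/32) S_n(p-6) mod p. *)
Lemma bernoulli_half_power_sum_p6 :
  congr_mod p 1 ((2 * (2 ^+ 5)^-1 - 1) * bernoulli (p - 5))
    (5 * (2 ^+ 5)^-1 * half_power_sum n (p - 6)).
Proof.
have m_odd : odd (p - 6).
  have -> : (p - 6 = (n - 3).*2.+1)%N by lia.
  by rewrite /= odd_double.
have p5 : (p - 5 = (p - 6).+1)%N by lia.
have p5_le : (p - 5 <= p - 2)%N by lia.
have T32 : congr_mod p 1 (2 ^+ (p - 6)) (2 ^+ 5)^-1.
  by apply: (fermat_inv p_prime (c := 2)); [apply: ndvd_lt | ]; lia.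
have m5 : congr_mod p 1 (- (p - 5)%:R) 5.
  apply: (congr_mod_eqmul p_prime (pintN (pint1 p_prime))).
  by rewrite natrB; [ring | lia].
have pB : pint (bernoulli (p - 5)) by apply: (bernoulli_pint p_prime).
have pA : pint (half_power_sum n (p - 6)) by apply: pint_half_power_sum.
have p2 : pint 2^-1 by apply: (pintV_small (isT : 0 < 2 <= 7)%N).
have p32 : pint (2 ^+ 5)^-1 by rewrite -exprVn; pint_auto p_prime.
have pT : pint (2 ^+ (p - 6)) by pint_auto p_prime.
have := bernoulli_half_power_sum m_odd; rewrite -p5 => /(_ p5_le) e.
apply: (congr_mod_trans p_prime _ (congr_mod_trans p_prime e _)).
- apply: congr_mod_sym; apply: (congr_mod_mul p_prime pB); first by pint_auto p_prime.
    apply: (congr_mod_sub p_prime _ (congr_mod_refl p_prime 1 1)).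
    exact: (congr_mod_scale p_prime (pint_nat p_prime 2) T32).
  exact: congr_mod_refl.
- apply: (congr_mod_mul p_prime pA); first by pint_auto p_prime.
    exact: (congr_mod_mul p_prime pT (pint_nat p_prime 5) m5 T32).
  exact: congr_mod_refl.
Qed.

Lemma harm5_congr : congr_mod p 1 (harm 5 n) (- 6 * bernoulli (p - 5)).
Proof.
have five_lt : (5 < p)%N by lia.
apply: (congr_mod_trans p_prime (harm_fermat p_prime p_eq five_lt)).
have p5 : pint 5^-1 by apply: (pintV_small (isT : 0 < 5 <= 7)%N).
have c_pint : pint (- 32 * 5^-1) by pint_auto p_prime.
apply: (congr_mod_by_diff (congr_mod_scale p_prime c_pint bernoulli_half_power_sum_p6)).
by field.
Qed.

Lemma harm3_half_congr : congr_mod p 3 (harm 3 n)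
  (6 * (harm 1 n.*2 / P ^+ 2) - 81%:R / 10%:R * P ^+ 2 * bernoulli (p - 5)).
Proof.
have e4 : congr_mod p 3 (P ^+ 1 * harm 4 n) (P ^+ 1 * (- (31 / 15) * P * harm 5 n)).
  by move: harm4_congr; rewrite -(congr_mod_mulP p_prime 2 1).
have e5 : congr_mod p 3 (P ^+ 2 * harm 5 n) (P ^+ 2 * (- 6 * bernoulli (p - 5))).
  by move: harm5_congr; rewrite -(congr_mod_mulP p_prime 1 2).
have p2 : pint 2^-1 by apply: (pintV_small (isT : 0 < 2 <= 7)%N).
have p5 : pint 5^-1 by apply: (pintV_small (isT : 0 < 5 <= 7)%N).
have c1 : pint (- 3 * 2^-1) by pint_auto p_prime.
have c2 : pint (27 * (2^-1 * 2^-1 * 5^-1)) by pint_auto p_prime.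
have := congr_mod_add p_prime harm3_congr (congr_mod_lin p_prime c1 c2 e4 e5).
move/congr_mod_by_diff; apply.
by field; rewrite P_neq0.
Qed.
End Main.

Unset Implicit Arguments.
Theorem lemma3p1 (p : nat) (hp : prime p) (hp7 : (7 < p)%N) :
  congr_mod p 3 (harm 3 (p.-1)./2)
    (6 * (harm 1 p.-1 / ((p ^ 2)%N)%:R)
     - (81%:R / 10%:R) * ((p ^ 2)%N)%:R * bernoulli (p - 5)).
Proof.
have p_odd : odd p by case: (even_prime hp) => // p2; rewrite p2 in hp7.
have pred_even : odd p.-1 = false.
  by move: p_odd; rewrite -{1}(prednK (prime_gt0 hp)) /=; case: odd.
have half : ((p.-1)./2).*2 = p.-1 by rewrite -[RHS]odd_double_half pred_even add0n.
have p_eq : p = ((p.-1)./2).*2.+1 by rewrite half prednK // prime_gt0.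
by rewrite -[in harm 1 _]half natrX; exact: (harm3_half_congr hp hp7 p_eq).
Qed.
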